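(* Assume $(a,b,c)\neq(0,0,0)$. (i) If $\sigma<\mu<a_1$, then $|e_{2\sigma}|<|e_{2\mu}|$. (ii) If $\sigma,\mu>0$, $\sigma,\mu\notin\{a_1,a_2,a_3\}$, $(\mu/\sigma)^2>a_3/a_1$ and $H(e_{2\sigma})=H(e_{2\mu})$, then $|e_{2\sigma}|>|e_{2\mu}|$. (iii) If $0<\sigma<a_1<a_3<\mu$ and $H(e_{2\sigma})=H(e_{2\mu})$, then $|e_{2\sigma}|>|e_{2\mu}|$.
   Context: Fix constants $0<a_1<a_2<a_3$ and $a,b,c\in\mathbb R$. For $\lambda\in\mathbb R\setminus\{a_1,a_2,a_3\}$ let $$e_{2\lambda}=\Big(\frac{a}{\lambda-a_1},\frac{b}{\lambda-a_2},\frac{c}{\lambda-a_3}\Big).$$ Let $$H(\mathbf x)=\tfrac12(a_1(x^1)^2+a_2(x^2)^2+a_3(x^3)^2)+ax^1+bx^2+cx^3,$$ and let $|\cdot|$ be the Euclidean norm on $\mathbb R^3$. *)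

From Stdlib Require Import Reals.
Open Scope R_scope.

Definition e2 (a1 a2 a3 a b c lam : R) : R * R * R :=
  (a / (lam - a1), b / (lam - a2), c / (lam - a3)).

Definition Hfun (a1 a2 a3 a b c : R) (x : R * R * R) : R :=
  let '(x1, x2, x3) := x in
  / 2 * (a1 * x1 ^ 2 + a2 * x2 ^ 2 + a3 * x3 ^ 2) + a * x1 + b * x2 + c * x3.

Definition norm3 (x : R * R * R) : R :=
  let '(x1, x2, x3) := x in sqrt (x1 ^ 2 + x2 ^ 2 + x3 ^ 2).

(* Write M(x) = sum_i x_i^2 / a_i and k = (a, b, c).  Expanding H gives
   2 H(e_{2 lam}) + M(k) = lam^2 M(e_{2 lam}), so equal energies force
   sigma^2 M(e_{2 sigma}) = mu^2 M(e_{2 mu}).  As a_1 M(x) <= |x|^2 <= a_3 M(x), the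
   condition a_3 sigma^2 < a_1 mu^2 then makes |e_{2 sigma}| exceed |e_{2 mu}|; part (iii)
   is the special case mu / sigma > a_3 / a_1 > 1.  Part (i) holds coordinatewise, since
   |k_i / (lam - a_i)| grows as lam increases towards a_i. *)
From Stdlib Require Import Reals Lra Psatz.
Open Scope R_scope.

Definition sqnorm3 (x : R * R * R) : R :=
  let '(x1, x2, x3) := x in x1 ^ 2 + x2 ^ 2 + x3 ^ 2.

Definition wsqnorm3 (a1 a2 a3 : R) (x : R * R * R) : R :=
  let '(x1, x2, x3) := x in x1 ^ 2 / a1 + x2 ^ 2 / a2 + x3 ^ 2 / a3.

Lemma pow2_pos (x : R) : x <> 0 -> 0 < x ^ 2.
Proof. intros Hx; rewrite <- Rsqr_pow2; exact (Rlt_0_sqr x Hx). Qed.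

Lemma sqnorm3_ge0 (x : R * R * R) : 0 <= sqnorm3 x.
Proof. destruct x as [[x1 x2] x3]; simpl; nra. Qed.

Lemma sqnorm3_pos (x : R * R * R) : x <> (0, 0, 0) -> 0 < sqnorm3 x.
Proof.
  destruct x as [[x1 x2] x3]; intros Hx; simpl sqnorm3.
  pose proof (pow2_ge_0 x1) as G1; pose proof (pow2_ge_0 x2) as G2; pose proof (pow2_ge_0 x3) as G3.
  destruct (Req_dec x1 0) as [-> | H1]; [destruct (Req_dec x2 0) as [-> | H2];
    [destruct (Req_dec x3 0) as [-> | H3] |] |].
  - congruence.
  - pose proof (pow2_pos x3 H3); lra.
  - pose proof (pow2_pos x2 H2); lra.
  - pose proof (pow2_pos x1 H1); lra.
Qed.

Lemma norm3_lt (x y : R * R * R) : sqnorm3 x < sqnorm3 y -> norm3 x < norm3 y.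
Proof.
  pose proof (sqnorm3_ge0 x) as Hx.
  destruct x as [[x1 x2] x3], y as [[y1 y2] y3]; intros Hxy.
  apply sqrt_lt_1_alt; split; assumption.
Qed.

Section WeightedNorm.

Variables a1 a2 a3 : R.
Hypotheses (Ha1 : 0 < a1) (Ha12 : a1 <= a2) (Ha23 : a2 <= a3).

Lemma wsqnorm3_bounds (x : R * R * R) :
  a1 * wsqnorm3 a1 a2 a3 x <= sqnorm3 x <= a3 * wsqnorm3 a1 a2 a3 x.
Proof.
  destruct x as [[x1 x2] x3]; unfold sqnorm3, wsqnorm3.
  assert (E1 : x1 ^ 2 = a1 * (x1 ^ 2 / a1)) by (field; lra).
  assert (E2 : x2 ^ 2 = a2 * (x2 ^ 2 / a2)) by (field; lra).
  assert (E3 : x3 ^ 2 = a3 * (x3 ^ 2 / a3)) by (field; lra).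
  pose proof (pow2_ge_0 x1); pose proof (pow2_ge_0 x2); pose proof (pow2_ge_0 x3).
  set (t1 := x1 ^ 2 / a1) in *; set (t2 := x2 ^ 2 / a2) in *; set (t3 := x3 ^ 2 / a3) in *.
  assert (0 <= t1) by nra; assert (0 <= t2) by nra; assert (0 <= t3) by nra.
  split; nra.
Qed.

Lemma wsqnorm3_pos (x : R * R * R) : x <> (0, 0, 0) -> 0 < wsqnorm3 a1 a2 a3 x.
Proof.
  intros Hx; pose proof (sqnorm3_pos x Hx); pose proof (wsqnorm3_bounds x).
  destruct (Rle_or_lt (wsqnorm3 a1 a2 a3 x) 0); [nra | assumption].
Qed.

End WeightedNorm.

Lemma sqr_div_lt_anti (k p q : R) :
  k <> 0 -> 0 < p -> p < q -> (k / q) ^ 2 < (k / p) ^ 2.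
Proof.
  intros Hk Hp Hpq.
  assert (Hkp : 0 < (k / p) ^ 2) by (apply pow2_pos; unfold Rdiv;
    apply Rmult_integral_contrapositive_currified; [exact Hk | apply Rinv_neq_0_compat; lra]).
  assert (Hkq : (k / q) ^ 2 * q ^ 2 = (k / p) ^ 2 * p ^ 2) by (field; lra).
  assert (Hpq2 : p ^ 2 < q ^ 2) by nra.
  assert (Hq2 : 0 < q ^ 2) by nra.
  apply (Rmult_lt_reg_r (q ^ 2)); nra.
Qed.

Lemma sqr_div_sub_le (k l m a : R) :
  l < m -> m < a -> (k / (l - a)) ^ 2 <= (k / (m - a)) ^ 2.
Proof.
  intros Hlm Hma.
  replace ((k / (l - a)) ^ 2) with ((k / (a - l)) ^ 2) by (field; lra).
  replace ((k / (m - a)) ^ 2) with ((k / (a - m)) ^ 2) by (field; lra).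
  destruct (Req_dec k 0) as [-> | Hk].
  - unfold Rdiv; rewrite !Rmult_0_l; lra.
  - apply Rlt_le, sqr_div_lt_anti; lra.
Qed.

Lemma sqr_div_sub_lt (k l m a : R) :
  k <> 0 -> l < m -> m < a -> (k / (l - a)) ^ 2 < (k / (m - a)) ^ 2.
Proof.
  intros Hk Hlm Hma.
  replace ((k / (l - a)) ^ 2) with ((k / (a - l)) ^ 2) by (field; lra).
  replace ((k / (m - a)) ^ 2) with ((k / (a - m)) ^ 2) by (field; lra).
  apply sqr_div_lt_anti; lra.
Qed.

Lemma sqr_ratio_gt (a1 a3 sigma mu : R) : 0 < a1 -> sigma <> 0 ->
  (mu / sigma) ^ 2 > a3 / a1 -> a3 * sigma ^ 2 < a1 * mu ^ 2.
Proof.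
  intros Ha1 Hs Hratio.
  assert (Hs2 : 0 < sigma ^ 2) by (apply pow2_pos; exact Hs).
  replace (a3 * sigma ^ 2) with (a3 / a1 * (a1 * sigma ^ 2)) by (field; lra).
  replace (a1 * mu ^ 2) with ((mu / sigma) ^ 2 * (a1 * sigma ^ 2)) by (field; exact Hs).
  apply Rmult_lt_compat_r; nra.
Qed.

Section Resolvent.

Variables a1 a2 a3 a b c : R.
Hypothesis Hk : (a, b, c) <> (0, 0, 0).

Let e lam := e2 a1 a2 a3 a b c lam.
Let H := Hfun a1 a2 a3 a b c.
Let M := wsqnorm3 a1 a2 a3.

Lemma sqnorm3_e2_lt (sigma mu : R) :
  sigma < mu -> mu < a1 -> mu < a2 -> mu < a3 -> sqnorm3 (e sigma) < sqnorm3 (e mu).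
Proof.
  intros Hsm Hm1 Hm2 Hm3; unfold e, e2, sqnorm3.
  pose proof (sqr_div_sub_le a sigma mu a1 Hsm Hm1).
  pose proof (sqr_div_sub_le b sigma mu a2 Hsm Hm2).
  pose proof (sqr_div_sub_le c sigma mu a3 Hsm Hm3).
  destruct (Req_dec a 0) as [-> | Ha]; [destruct (Req_dec b 0) as [-> | Hb];
    [destruct (Req_dec c 0) as [-> | Hc] |] |].
  - congruence.
  - pose proof (sqr_div_sub_lt c sigma mu a3 Hc Hsm Hm3); lra.
  - pose proof (sqr_div_sub_lt b sigma mu a2 Hb Hsm Hm2); lra.
  - pose proof (sqr_div_sub_lt a sigma mu a1 Ha Hsm Hm1); lra.
Qed.

Lemma e2_neq0 (lam : R) : lam <> a1 -> lam <> a2 -> lam <> a3 -> e lam <> (0, 0, 0).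
Proof.
  intros H1 H2 H3 E; apply Hk; unfold e, e2 in E; injection E as Ea Eb Ec.
  assert (Num : forall k d, d <> 0 -> k / d = 0 -> k = 0).
  { intros k d Hd Ekd; destruct (Rmult_integral _ _ Ekd) as [-> | Hinv]; [reflexivity |].
    exact (False_ind _ (Rinv_neq_0_compat d Hd Hinv)). }
  rewrite (Num a (lam - a1)), (Num b (lam - a2)), (Num c (lam - a3)); auto; lra.
Qed.

Lemma Hfun_e2 (lam : R) : a1 <> 0 -> a2 <> 0 -> a3 <> 0 ->
  lam <> a1 -> lam <> a2 -> lam <> a3 ->
  2 * H (e lam) + M (a, b, c) = lam ^ 2 * M (e lam).
Proof.
  intros. unfold H, M, e, Hfun, wsqnorm3, e2.
  assert (lam - a1 <> 0) by lra; assert (lam - a2 <> 0) by lra; assert (lam - a3 <> 0) by lra.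
  field; repeat split; assumption.
Qed.

Hypotheses (Ha1 : 0 < a1) (Ha12 : a1 <= a2) (Ha23 : a2 <= a3).

Lemma sqnorm3_e2_gt_of_Hfun_eq (sigma mu : R) :
  0 < sigma -> sigma <> a1 -> sigma <> a2 -> sigma <> a3 ->
  mu <> a1 -> mu <> a2 -> mu <> a3 ->
  a3 * sigma ^ 2 < a1 * mu ^ 2 -> H (e sigma) = H (e mu) ->
  sqnorm3 (e mu) < sqnorm3 (e sigma).
Proof.
  intros Hs Hs1 Hs2 Hs3 Hm1 Hm2 Hm3 Hratio HH.
  assert (Hscale : sigma ^ 2 * M (e sigma) = mu ^ 2 * M (e mu)).
  { rewrite <- !Hfun_e2, HH by lra; reflexivity. }
  destruct (wsqnorm3_bounds a1 a2 a3 Ha1 Ha12 Ha23 (e sigma)) as [Hlow _].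
  destruct (wsqnorm3_bounds a1 a2 a3 Ha1 Ha12 Ha23 (e mu)) as [_ Hup].
  pose proof (wsqnorm3_pos a1 a2 a3 Ha1 Ha12 Ha23 _ (e2_neq0 mu Hm1 Hm2 Hm3)) as HMmu.
  fold M in Hlow, Hup, HMmu.
  apply (Rmult_lt_reg_l (sigma ^ 2)); [nra |].
  (* sigma^2 |e mu|^2 <= a3 sigma^2 M(e mu) < a1 mu^2 M(e mu) = a1 sigma^2 M(e sigma) *)
  nra.
Qed.

End Resolvent.

Theorem lemma6p1 (a1 a2 a3 a b c : R) :
  0 < a1 -> a1 < a2 -> a2 < a3 ->
  ~ (a = 0 /\ b = 0 /\ c = 0) ->
  (forall sigma mu : R, sigma < mu -> mu < a1 ->
     norm3 (e2 a1 a2 a3 a b c sigma) < norm3 (e2 a1 a2 a3 a b c mu)) /\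
  (forall sigma mu : R, 0 < sigma -> 0 < mu ->
     sigma <> a1 -> sigma <> a2 -> sigma <> a3 ->
     mu <> a1 -> mu <> a2 -> mu <> a3 ->
     (mu / sigma) ^ 2 > a3 / a1 ->
     Hfun a1 a2 a3 a b c (e2 a1 a2 a3 a b c sigma) =
       Hfun a1 a2 a3 a b c (e2 a1 a2 a3 a b c mu) ->
     norm3 (e2 a1 a2 a3 a b c sigma) > norm3 (e2 a1 a2 a3 a b c mu)) /\
  (forall sigma mu : R, 0 < sigma -> sigma < a1 -> a3 < mu ->
     Hfun a1 a2 a3 a b c (e2 a1 a2 a3 a b c sigma) =
       Hfun a1 a2 a3 a b c (e2 a1 a2 a3 a b c mu) ->
     norm3 (e2 a1 a2 a3 a b c sigma) > norm3 (e2 a1 a2 a3 a b c mu)).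
Proof.
  intros Ha1 Ha12 Ha23 Habc.
  assert (Hk : (a, b, c) <> (0, 0, 0)) by (intro E; injection E; tauto).
  split; [| split].
  - intros sigma mu Hsm Hmu; apply norm3_lt, sqnorm3_e2_lt; auto; lra.
  - intros sigma mu Hs Hm ? ? ? ? ? ? Hratio HH.
    apply norm3_lt, sqnorm3_e2_gt_of_Hfun_eq; auto; try lra.
    apply sqr_ratio_gt; lra.
  - intros sigma mu Hs Hs1 Hm HH.
    apply norm3_lt, sqnorm3_e2_gt_of_Hfun_eq; auto; try lra.
    assert (sigma * a3 < a1 * mu) by nra.
    assert (sigma * (sigma * a3) < sigma * (a1 * mu)) by (apply Rmult_lt_compat_l; lra).
    assert (sigma * (a1 * mu) < mu * (a1 * mu)) by (apply Rmult_lt_compat_r; nra).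
    nra.
Qed.
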